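(* Let $A$ be a selfadjoint operator on a separable infinite-dimensional Hilbert space $\mathcal{H}$, and let $\mathcal{L}=(\mathcal{L}_n)$ be either an $A$-regular Galerkin sequence or, if $A\ge0$, an $A^{1/2}$-regular Galerkin sequence. Let $\lambda\in\mathbb{R}$, let $\mathcal{V}\subset\operatorname{D}(A)$ be a subspace of dimension $d>0$ with orthogonal projection $\pi_{\mathcal{V}}$, and let $\varepsilon>0$ be such that $\|\pi_{\mathcal{V}}(A-\lambda)x\|\le\varepsilon\|x\|$ for all $x\in\mathcal{V}$. Then there exist $N>0$ and subspaces $\mathcal{W}_n\subset\mathcal{L}_n$ of dimension $d$ such that, for all $n\ge N$, \[ \|\pi_{\mathcal{W}_n}(A-\lambda)y\|\le2\varepsilon\sqrt{d}\,\|y\|\qquad\forall y\in\mathcal{W}_n, \] where $\pi_{\mathcal{W}_n}$ is the orthogonal projection onto $\mathcal{W}_n$.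
   Context: A sequence $\mathcal{L}=(\mathcal{L}_n)$ of finite-dimensional subspaces $\mathcal{L}_n\subset\operatorname{D}(A)$ is $A$-regular if for every $f\in\operatorname{D}(A)$ there exist $f_n\in\mathcal{L}_n$ with $\|f_n-f\|+\|Af_n-Af\|\to0$. If $A\ge0$, finite-dimensional $\mathcal{L}_n\subset\operatorname{D}(A^{1/2})$ form an $A^{1/2}$-regular sequence if every $f\in\operatorname{D}(A^{1/2})$ is the limit of some $f_n\in\mathcal{L}_n$ in the norm $\|\cdot\|+\|A^{1/2}\cdot\|$; in that case, for a finite-dimensional subspace $\mathcal{W}\subset\operatorname{D}(A^{1/2})$ and $y\in\mathcal{W}$, $\pi_{\mathcal{W}}(A-\lambda)y$ is understood in the form sense, i.e. as the element $z\in\mathcal{W}$ with $\langle w,z\rangle=\langle A^{1/2}w,A^{1/2}y\rangle-\lambda\langle w,y\rangle$ for all $w\in\mathcal{W}$. *)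

From HB Require Import structures.
From mathcomp Require Import all_boot all_order all_algebra.
From mathcomp Require Import complex.
From mathcomp Require Import boolp classical_sets reals.
Set Implicit Arguments. Unset Strict Implicit. Unset Printing Implicit Defensive.
Import Order.TTheory GRing.Theory Num.Theory.
Local Open Scope ring_scope.
Local Open Scope classical_set_scope.

Section Hilbert.
Variables (R : realType) (H : lmodType R[i]) (ip : H -> H -> R[i]).

Definition hnorm (x : H) : R := Num.sqrt (@complex.Re R (ip x x)).

Definition lin_indep (d : nat) (b : 'I_d -> H) : Prop :=
  forall c : 'I_d -> R[i], \sum_(i < d) c i *: b i = 0 -> forall i, c i = 0.

Definition is_sep_inf_dim_hilbert : Prop :=
  [/\ (forall a x y z, ip (a *: x + y) z = a * ip x z + ip y z),
      (forall x y, ip y x = (ip x y)^*),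
      (forall x, 0 <= ip x x),
      (forall x, ip x x = 0 -> x = 0) &
   [/\
      (forall u : nat -> H,
         (forall e : R, 0 < e -> exists N, forall m n, (N <= m)%N -> (N <= n)%N ->
              hnorm (u m - u n) < e) ->
         exists l, forall e : R, 0 < e -> exists N, forall n, (N <= n)%N ->
              hnorm (u n - l) < e) ,
      (exists s : nat -> H, forall x (e : R), 0 < e -> exists n, hnorm (x - s n) < e) &
      (forall d, exists b : 'I_d -> H, lin_indep b)]].

Definition is_subspace (S : set H) : Prop :=
  S 0 /\ forall (a : R[i]) x y, S x -> S y -> S (a *: x + y).

Definition has_dim (S : set H) (d : nat) : Prop :=
  is_subspace S /\
  exists b : 'I_d -> H, [/\ forall i, S (b i), lin_indep b &
     forall x, S x -> exists c : 'I_d -> R[i], x = \sum_(i < d) c i *: b i].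

Definition fin_dim (S : set H) : Prop := exists d, has_dim S d.

Definition orth_proj (W : set H) (v : H) : H :=
  xget 0 [set w | W w /\ forall u, W u -> ip (v - w) u = 0].

(* (possibly unbounded) operators: a map A together with its domain DA;
   selfadjointness: dense linear domain, A linear on it, and the adjoint
   A^* (defined through the inner product) has domain DA and equals A. *)
Definition selfadjoint (A : H -> H) (DA : set H) : Prop :=
  [/\ is_subspace DA,
      (forall (a : R[i]) x y, DA x -> DA y -> A (a *: x + y) = a *: A x + A y),
      (forall x (e : R), 0 < e -> exists y, DA y /\ hnorm (x - y) < e) &
      (forall y z, (forall x, DA x -> ip (A x) y = ip x z) <-> (DA y /\ z = A y))].

Definition nonneg_op (A : H -> H) (DA : set H) : Prop :=
  forall x, DA x -> 0 <= ip (A x) x.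

Definition is_sqrt_op (A : H -> H) (DA : set H) (B : H -> H) (DB : set H) : Prop :=
  [/\ selfadjoint B DB, nonneg_op B DB,
      (forall x, DA x <-> (DB x /\ DB (B x))) &
      (forall x, DA x -> A x = B (B x))].

Definition galerkin (L : nat -> set H) : Prop :=
  forall n, fin_dim (L n).

Definition regular (T : H -> H) (DT : set H) (L : nat -> set H) : Prop :=
  (forall n, L n `<=` DT) /\
  forall f, DT f -> exists fn : nat -> H, (forall n, L n (fn n)) /\
    forall e : R, 0 < e -> exists N, forall n, (N <= n)%N ->
      hnorm (fn n - f) + hnorm (T (fn n) - T f) < e.

(* form-sense projection pi_W (A - lam) y, with B = A^{1/2}:
   the z in W with <w,z> = <Bw,By> - lam <w,y> for all w in W *)
Definition form_proj (B : H -> H) (lam : R) (W : set H) (y : H) : H :=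
  xget 0 [set z | W z /\ forall w, W w -> ip w z = ip (B w) (B y) - (lam%:C)%C * ip w y].

End Hilbert.

From HB Require Import structures.
From mathcomp Require Import all_boot all_order all_algebra.
From mathcomp Require Import complex.
From mathcomp Require Import boolp classical_sets filter reals.
From mathcomp Require Import ring lra.
Set Implicit Arguments.
Unset Strict Implicit.
Unset Printing Implicit Defensive.
Import Order.TTheory GRing.Theory Num.Theory.
Local Open Scope ring_scope.
Local Open Scope classical_set_scope.

(* Orthonormalise a basis of V into e_1, ..., e_d and let W_n be spanned by vectors
   f_i^n of L_n converging to e_i in the graph norm. Once |f_i^n - e_i| <= delta with
   d delta <= 1/4, the f_i^n stay independent and |sum c_i f_i^n| >= 3/4 |sum c_i e_i|,
   so the coefficients of y in W_n are bounded by d |y|. The hypothesis on V says that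
   the form h(x, u) = <(A - lam) x, u> (or <A^{1/2} x, A^{1/2} u> - lam <x, u>) is
   bounded by eps |x| |u| on V; since h(f_i^n, f_j^n) -> h(e_i, e_j), it is bounded by
   2 eps |y| |u| on W_n, which bounds the projection. *)

Section ComplexModulus.
Context {R : rcfType}.
Implicit Types z w : R[i].
Local Notation normc := (@Normc.normc R).

Lemma normcE z : `|z| = ((normc z)%:C)%C.
Proof. by case: z. Qed.

Lemma normc_ge0 z : 0 <= normc z.
Proof. by case: z => a b; apply: sqrtr_ge0. Qed.

Lemma normcJ z : normc z^* = normc z.
Proof. by apply: (@complexI R); rewrite -!normcE norm_conjC. Qed.

Lemma normc_real (r : R) : normc ((r%:C)%C) = `|r|.
Proof. by rewrite /= expr0n /= addr0 sqrtr_sqr. Qed.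

Lemma real_complexJ (r : R) : ((r%:C)%C)^* = (r%:C)%C.
Proof. by apply: conj_Creal; apply/complex_realP; exists r. Qed.

Lemma normc_sqr z : ((normc z ^+ 2)%:C)%C = z * z^*.
Proof. by rewrite rmorphXn /= -normcE normCK. Qed.

Lemma Re_le_normc z : complex.Re z <= normc z.
Proof.
case: z => a b /=; apply: le_trans (ler_norm a) _; rewrite -sqrtr_sqr.
by rewrite ler_sqrt ?addr_ge0 ?sqr_ge0 // lerDl sqr_ge0.
Qed.

Lemma normc_sum (I : Type) (r : seq I) (F : I -> R[i]) :
  normc (\sum_(i <- r) F i) <= \sum_(i <- r) normc (F i).
Proof.
elim/big_ind2: _ => [|a b x y ha hb|//]; first by rewrite Normc.normc0.
exact: le_trans (le_normcD _ _) (lerD ha hb).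
Qed.

End ComplexModulus.

Section InnerProductSpace.
Variables (R : realType) (H : lmodType R[i]) (ip : H -> H -> R[i]).
Hypothesis ipDZl : forall a x y z, ip (a *: x + y) z = a * ip x z + ip y z.
Hypothesis ipC : forall x y, ip y x = (ip x y)^*.
Hypothesis ip_ge0 : forall x, 0 <= ip x x.
Hypothesis ip_eq0 : forall x, ip x x = 0 -> x = 0.

Local Notation normc := (@Normc.normc R).
Local Notation hn := (hnorm ip).
Implicit Types (x y z u v : H) (a : R[i]).

Lemma ip0l z : ip 0 z = 0.
Proof.
have := ipDZl 1 0 0 z; rewrite scale1r addr0 mul1r.
by rewrite -{1}[ip 0 z]addr0 => /addrI <-.
Qed.

Lemma ipZl a x z : ip (a *: x) z = a * ip x z.
Proof. by rewrite -[a *: x]addr0 ipDZl ip0l addr0. Qed.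

Lemma ipDl x y z : ip (x + y) z = ip x z + ip y z.
Proof. by rewrite -[x]scale1r ipDZl mul1r scale1r. Qed.

Lemma ipNl x z : ip (- x) z = - ip x z.
Proof. by rewrite -scaleN1r ipZl mulN1r. Qed.

Lemma ipBl x y z : ip (x - y) z = ip x z - ip y z.
Proof. by rewrite ipDl ipNl. Qed.

Lemma ip0r z : ip z 0 = 0.
Proof. by rewrite ipC ip0l conjC0. Qed.

Lemma ipZr a x z : ip z (a *: x) = a^* * ip z x.
Proof. by rewrite ipC ipZl rmorphM /= -ipC. Qed.

Lemma ipDr x y z : ip z (x + y) = ip z x + ip z y.
Proof. by rewrite ipC ipDl rmorphD /= -!ipC. Qed.

Lemma ipBr x y z : ip z (x - y) = ip z x - ip z y.
Proof. by rewrite ipC ipBl rmorphB /= -!ipC. Qed.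

Lemma ip_suml (I : Type) (r : seq I) (F : I -> H) z :
  ip (\sum_(i <- r) F i) z = \sum_(i <- r) ip (F i) z.
Proof. by elim/big_ind2: _ => [|? ? ? ? <- <-|//]; rewrite ?ip0l ?ipDl. Qed.

Lemma ip_sumr (I : Type) (r : seq I) (F : I -> H) z :
  ip z (\sum_(i <- r) F i) = \sum_(i <- r) ip z (F i).
Proof. by elim/big_ind2: _ => [|? ? ? ? <- <-|//]; rewrite ?ip0r ?ipDr. Qed.

Lemma ipxx x : ip x x = ((hn x ^+ 2)%:C)%C.
Proof.
have ip_real : ip x x \is Num.real by apply: ger0_real.
by rewrite sqr_sqrtr ?RRe_real // -lecR RRe_real.
Qed.

Lemma hnorm_ge0 x : 0 <= hn x.
Proof. exact: sqrtr_ge0. Qed.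

Lemma hnorm_eq0 x : hn x = 0 -> x = 0.
Proof. by move=> x0; apply: ip_eq0; rewrite ipxx x0 expr0n. Qed.

Lemma hnorm0 : hn 0 = 0.
Proof. by rewrite /hnorm ip0l sqrtr0. Qed.

Lemma hnormZ a x : hn (a *: x) = normc a * hn x.
Proof.
apply/eqP; rewrite -(eqrXn2 (n := 2)) ?mulr_ge0 ?normc_ge0 ?hnorm_ge0 //.
apply/eqP/(@complexI R); rewrite -ipxx exprMn rmorphM /= normc_sqr -ipxx.
by rewrite ipZl ipZr mulrA.
Qed.

Lemma hnormN x : hn (- x) = hn x.
Proof.
rewrite -scaleN1r hnormZ -(rmorphN1 (real_complex R)) normc_real normrN1.
by rewrite mul1r.
Qed.

Lemma hnormB x y : hn (x - y) = hn (y - x).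
Proof. by rewrite -hnormN opprB. Qed.

Lemma cauchy_schwarz x y : normc (ip x y) <= hn x * hn y.
Proof.
have [y0|y_neq0] := eqVneq (hn y) 0.
  by rewrite (hnorm_eq0 y0) ip0r Normc.normc0 hnorm0 mulr0.
have y_gt0 : 0 < hn y by rewrite lt_def y_neq0 hnorm_ge0.
set a := ip x y; set b := ((hn y ^+ 2)%:C)%C.
have : 0 <= ip (b *: x - a *: y) (b *: x - a *: y) by [].
have -> : ip (b *: x - a *: y) (b *: x - a *: y)
    = b * (b * (hn x ^+ 2)%:C%C - (normc a ^+ 2)%:C%C).
  rewrite !ipBl !ipBr !ipZl !ipZr !ipxx -/b (ipC x y) -/a real_complexJ normc_sqr.
  by ring.
rewrite /b -rmorphM -rmorphB -rmorphM ler0c pmulr_rge0 ?exprn_gt0 // subr_ge0 => ineq.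
rewrite -(ler_pXn2r (n := 2)) ?nnegrE ?mulr_ge0 ?normc_ge0 ?hnorm_ge0 //.
by rewrite exprMn mulrC.
Qed.

Lemma hnormD x y : hn (x + y) <= hn x + hn y.
Proof.
rewrite -(ler_pXn2r (n := 2)) ?nnegrE ?addr_ge0 ?hnorm_ge0 //.
have sqrE w : hn w ^+ 2 = complex.Re (ip w w) by rewrite ipxx.
have ReJ (w : R[i]) : complex.Re w^* = complex.Re w by case: w.
rewrite sqrE ipDl !ipDr (ipC x y) !raddfD /= ReJ -!sqrE.
by have := Re_le_normc (ip x y); have := cauchy_schwarz x y; nra.
Qed.

Lemma hnorm_sum (I : Type) (r : seq I) (F : I -> H) :
  hn (\sum_(i <- r) F i) <= \sum_(i <- r) hn (F i).
Proof.
elim/big_ind2: _ => [|? ? ? ? h1 h2|//]; first by rewrite hnorm0.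
exact: le_trans (hnormD _ _) (lerD h1 h2).
Qed.

Implicit Types S : set H.

Lemma subspace0 S : is_subspace S -> S 0.
Proof. by case. Qed.

Lemma subspaceD S x y : is_subspace S -> S x -> S y -> S (x + y).
Proof. by case=> _ S_ZD Sx Sy; rewrite -[x]scale1r; apply: S_ZD. Qed.

Lemma subspaceZ S a x : is_subspace S -> S x -> S (a *: x).
Proof. by case=> S0 S_ZD Sx; rewrite -[_ *: _]addr0; apply: S_ZD. Qed.

Lemma subspaceB S x y : is_subspace S -> S x -> S y -> S (x - y).
Proof.
by move=> SS Sx Sy; rewrite -scaleN1r; apply: subspaceD => //; apply: subspaceZ.
Qed.

Lemma subspace_sum S (I : Type) (r : seq I) (F : I -> H) :
  is_subspace S -> (forall i, S (F i)) -> S (\sum_(i <- r) F i).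
Proof.
move=> SS SF; elim/big_ind: _ => //; first exact: subspace0.
by move=> ? ?; apply: subspaceD.
Qed.

Definition lincomb n (c : 'I_n -> R[i]) (g : 'I_n -> H) : H := \sum_i c i *: g i.

Definition span n (g : 'I_n -> H) : set H :=
  [set y | exists c : 'I_n -> R[i], y = lincomb c g].

Definition l1norm n (c : 'I_n -> R[i]) : R := \sum_i normc (c i).

Lemma l1norm_ge0 n (c : 'I_n -> R[i]) : 0 <= l1norm c.
Proof. by apply: sumr_ge0 => i _; apply: normc_ge0. Qed.

Lemma lincomb_delta n (g : 'I_n -> H) i : lincomb (fun j => (j == i)%:R) g = g i.
Proof.
rewrite /lincomb (bigD1 i) //= eqxx scale1r big1 ?addr0 // => j /negbTE ->.
exact: scale0r.
Qed.

Lemma lincombB n (c : 'I_n -> R[i]) f g :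
  lincomb c f - lincomb c g = lincomb c (fun i => f i - g i).
Proof. by rewrite /lincomb -sumrB; apply: eq_bigr => i _; rewrite scalerBr. Qed.

Lemma hnorm_lincomb_le n (c : 'I_n -> R[i]) g M :
  (forall i, hn (g i) <= M) -> hn (lincomb c g) <= l1norm c * M.
Proof.
move=> gM; apply: le_trans (hnorm_sum _ _) _; rewrite /l1norm mulr_suml.
by apply: ler_sum => i _; rewrite hnormZ ler_wpM2l ?normc_ge0.
Qed.

Lemma span_subspace n (g : 'I_n -> H) : is_subspace (span g).
Proof.
split; first by exists (fun=> 0); rewrite /lincomb big1 // => i _; rewrite scale0r.
move=> a _ _ [c ->] [c' ->]; exists (fun i => a * c i + c' i).
rewrite /lincomb scaler_sumr -big_split; apply: eq_bigr => i _ /=.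
by rewrite scalerDl scalerA.
Qed.

Lemma span_mem n (g : 'I_n -> H) i : span g (g i).
Proof. by exists (fun j => (j == i)%:R); rewrite lincomb_delta. Qed.

Lemma span_min n (g : 'I_n -> H) S :
  is_subspace S -> (forall i, S (g i)) -> span g `<=` S.
Proof. by move=> SS Sg _ [c ->]; apply: subspace_sum => // i; apply: subspaceZ. Qed.

Lemma has_dim_span n (g : 'I_n -> H) : lin_indep g -> has_dim (span g) n.
Proof.
move=> g_indep; split; first exact: span_subspace.
by exists g; split; [exact: span_mem | exact: g_indep | move=> _ [c ->]; exists c].
Qed.

Definition orthonormal n (e : 'I_n -> H) := forall i j, ip (e i) (e j) = (i == j)%:R.

Definition fourier n (e : 'I_n -> H) x : H := lincomb (fun i => ip x (e i)) e.

Section Orthonormal.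
Variables (n : nat) (e : 'I_n -> H).
Hypothesis e_on : orthonormal e.

Lemma ip_lincomb_onb c j : ip (lincomb c e) (e j) = c j.
Proof.
rewrite ip_suml (bigD1 j) //= ipZl e_on eqxx mulr1 big1 ?addr0 // => i /negbTE ij.
by rewrite ipZl e_on ij mulr0.
Qed.

Lemma hnorm_onb i : hn (e i) = 1.
Proof.
apply/eqP; rewrite -(eqrXn2 (n := 2)) ?hnorm_ge0 // expr1n.
by rewrite /hnorm sqr_sqrtr e_on eqxx.
Qed.

Lemma l1norm_le_onb c : l1norm c <= n%:R * hn (lincomb c e).
Proof.
rewrite /l1norm mulr_natl -[n in _ *+ n]card_ord -sumr_const; apply: ler_sum => i _.
by rewrite -[c i]ip_lincomb_onb; apply: le_trans (cauchy_schwarz _ _) _; rewrite hnorm_onb mulr1.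
Qed.

Lemma ip_sub_fourier x j : ip (x - fourier e x) (e j) = 0.
Proof. by rewrite ipBl ip_lincomb_onb subrr. Qed.

Lemma orth_proj_exists S x :
  is_subspace S -> (forall i, S (e i)) -> S `<=` span e ->
  exists w, S w /\ forall u, S u -> ip (x - w) u = 0.
Proof.
move=> SS Se Sspan; exists (fourier e x); split.
  by apply: subspace_sum => // i; apply: subspaceZ.
move=> u /Sspan [c ->]; rewrite ip_sumr big1 // => j _.
by rewrite ipZr ip_sub_fourier mulr0.
Qed.

End Orthonormal.

Lemma ltn_ord_last n (i : 'I_n.+1) : (i < n)%N \/ (i : nat) = n.
Proof. by move: (ltn_ord i); rewrite ltnS leq_eqVlt => /orP[/eqP|]; [right|left]. Qed.

Section GramSchmidt.
Local Notation first g n := (fun i : 'I_n => g (i : nat)).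

Lemma lincomb_first_last n (g : nat -> H) (c : 'I_n -> R[i]) a :
  lincomb (fun k : 'I_n.+1 => oapp c a (insub (k : nat))) (first g n.+1)
  = lincomb c (first g n) + a *: g n.
Proof.
rewrite /lincomb big_ord_recr /= insubF ?ltnn //; congr (_ + _).
by apply: eq_bigr => i _; rewrite /= valK.
Qed.

Lemma lin_indep_first n (g : nat -> H) :
  lin_indep (first g n.+1) -> lin_indep (first g n).
Proof.
move=> indep c c0 i; have := lincomb_first_last g c 0.
rewrite /lincomb in c0 *; rewrite c0 scale0r addr0 => /indep/(_ (widen_ord (leqnSn n) i)).
by rewrite /= valK.
Qed.

Lemma lin_indep_notin_span n (g : nat -> H) :
  lin_indep (first g n.+1) -> ~ span (first g n) (g n).
Proof.
move=> indep [c gn]; have := lincomb_first_last g c (-1).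
rewrite -gn scaleN1r subrr => /indep/(_ ord_max) /=.
by rewrite insubF ?ltnn //= => /eqP; rewrite oppr_eq0 oner_eq0.
Qed.

Lemma orthonormal_last n (e : nat -> H) u :
  orthonormal (first e n) -> hn u = 1 -> (forall j : 'I_n, ip u (e j) = 0) ->
  orthonormal (first (fun k => if (k < n)%N then e k else u) n.+1).
Proof.
move=> e_on u1 u_orth i j; rewrite -val_eqE /=.
have uu : ip u u = 1 by rewrite ipxx u1 expr1n.
case: (ltn_ord_last i) (ltn_ord_last j) => [lt_in|->] [lt_jn|->]; rewrite ?ltnn.
- by rewrite lt_in lt_jn (e_on (Ordinal lt_in) (Ordinal lt_jn)) -val_eqE.
- by rewrite lt_in ipC (u_orth (Ordinal lt_in)) conjC0 ltn_eqF.
- by rewrite lt_jn (u_orth (Ordinal lt_jn)) gtn_eqF.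
- by rewrite eqxx uu.
Qed.

Lemma gram_schmidt n (b : nat -> H) : lin_indep (first b n) ->
  exists e : nat -> H, [/\ orthonormal (first e n),
    forall i : 'I_n, span (first b n) (e i) &
    forall i : 'I_n, span (first e n) (b i)].
Proof.
elim: n => [|n IH] indep; first by exists b; split => -[].
have [e' [e'_on e'_in b_in]] := IH (lin_indep_first indep).
have b_le : span (first b n) `<=` span (first b n.+1).
  by apply: span_min (span_subspace _) _ => i; apply: (span_mem _ (widen_ord _ i)).
set v := b n - fourier (first e' n) (b n).
have v_orth (j : 'I_n) : ip v (e' j) = 0 by apply: (ip_sub_fourier e'_on).
have v_gt0 : 0 < hn v.
  rewrite lt_def hnorm_ge0 andbT; apply/eqP => /hnorm_eq0 /eqP.
  rewrite subr_eq0 => /eqP bn; apply: (lin_indep_notin_span indep).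
  by rewrite bn; apply: (span_min (span_subspace _) e'_in); exists (fun i => ip (b n) (e' i)).
set u := ((hn v)^-1%:C)%C *: v.
have u1 : hn u = 1 by rewrite hnormZ normc_real ger0_norm ?invr_ge0 ?mulVf ?gt_eqF ?ltW.
have bnE : b n = ((hn v)%:C)%C *: u + fourier (first e' n) (b n).
  by rewrite scalerA -rmorphM divff ?gt_eqF // scale1r subrK.
exists (fun k => if (k < n)%N then e' k else u); split.
- by apply: orthonormal_last => // j; rewrite ipZl v_orth mulr0.
- move=> i; case: (ltn_ord_last i) => [lt_in|->]; rewrite ?ltnn.
    by rewrite lt_in; apply/b_le/(e'_in (Ordinal lt_in)).
  apply: subspaceZ (span_subspace _) _.
  apply: subspaceB (span_subspace _) _ _; first exact: (span_mem (first b n.+1) ord_max).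
  by apply/b_le/(span_min (span_subspace _) e'_in); exists (fun i => ip (b n) (e' i)).
- set e := fun k => if (k < n)%N then e' k else u.
  have e'_le : span (first e' n) `<=` span (first e n.+1).
    apply: span_min (span_subspace _) _ => i.
    by have := span_mem (first e n.+1) (widen_ord (leqnSn n) i); rewrite /e /= ltn_ord.
  move=> i; case: (ltn_ord_last i) => [lt_in|->]; first exact/e'_le/(b_in (Ordinal lt_in)).
  rewrite bnE; apply: subspaceD (span_subspace _) _ _.
    apply: subspaceZ (span_subspace _) _.
    by have := span_mem (first e n.+1) ord_max; rewrite /e /= ltnn.
  by apply: e'_le; exists (fun i => ip (b n) (e' i)).
Qed.

End GramSchmidt.

Lemma onb_of_dim V d : has_dim V d ->
  exists e : 'I_d -> H, [/\ orthonormal e, forall i, V (e i) & V `<=` span e].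
Proof.
case=> V_sub [b [Vb b_indep b_span]].
pose bn k := oapp b 0 (insub k : option 'I_d).
have bnE (i : 'I_d) : bn i = b i by rewrite /bn valK.
have [e [e_on e_in b_in]] : exists e : nat -> H, [/\ orthonormal (fun i : 'I_d => e i),
    forall i : 'I_d, span (fun i : 'I_d => bn i) (e i) &
    forall i : 'I_d, span (fun i : 'I_d => e i) (bn i)].
  apply: gram_schmidt => c c0; apply: b_indep.
  by rewrite -[RHS]c0; apply: eq_bigr => i _; rewrite bnE.
exists (fun i : 'I_d => e i); split => //.
- move=> i; apply: span_min (e_in i) => // j; rewrite bnE; exact: Vb.
- move=> x /b_span [c ->]; apply: subspace_sum (span_subspace _) _ => i.
  by apply: subspaceZ (span_subspace _) _; rewrite -bnE; apply: b_in.
Qed.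

Lemma ip_orth_proj S x u :
  (exists w, S w /\ forall u, S u -> ip (x - w) u = 0) -> S u ->
  ip x u = ip (orth_proj ip S x) u.
Proof.
move=> /(xgetPex 0) [_ proj_orth] Su; apply/eqP; rewrite -subr_eq0 -ipBl.
by apply/eqP; apply: proj_orth.
Qed.

Lemma hnorm_le_of_ip S w C : 0 <= C -> S w ->
  (forall u, S u -> normc (ip w u) <= C * hn u) -> hn w <= C.
Proof.
move=> C_ge0 Sw wC; have w_ge0 := hnorm_ge0 w.
have : hn w ^+ 2 <= C * hn w.
  by apply: le_trans (wC _ Sw); rewrite -[hn w ^+ 2]/(complex.Re (_%:C)%C) -ipxx Re_le_normc.
nra.
Qed.

Lemma hnorm_orth_proj_le S x C : 0 <= C ->
  (forall u, S u -> normc (ip x u) <= C * hn u) -> hn (orth_proj ip S x) <= C.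
Proof.
move=> C_ge0 xC; have [ex|nex] := pselect (exists w, S w /\ forall u, S u -> ip (x - w) u = 0).
  have [Sw _] := xgetPex 0 ex.
  by apply: hnorm_le_of_ip Sw _ => // u Su; rewrite -ip_orth_proj ?xC.
by rewrite /orth_proj xgetPN ?hnorm0 // => w Pw; apply: nex; exists w.
Qed.

Lemma hnorm_form_proj_le (B : H -> H) (lam : R) S y C : 0 <= C ->
  (forall z, S z -> normc (ip (B z) (B y) - (lam%:C)%C * ip z y) <= C * hn z) ->
  hn (form_proj ip B lam S y) <= C.
Proof.
move=> C_ge0 yC; rewrite /form_proj.
set P := [set z | _]; have [ex|nex] := pselect (exists z, P z); last first.
  by rewrite xgetPN ?hnorm0 // => z Pz; apply: nex; exists z.
have [Sw w_eq] := xgetPex 0 ex.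
apply: hnorm_le_of_ip Sw _ => // u Su.
by rewrite ipC normcJ w_eq // yC.
Qed.

Section Perturbation.
Variables (d : nat) (e f : 'I_d -> H) (delta : R).
Hypotheses (e_on : orthonormal e) (delta_ge0 : 0 <= delta).
Hypotheses (delta_small : d%:R * delta <= 1 / 4) (f_near : forall i, hn (f i - e i) <= delta).

Lemma hnorm_lincomb_perturb c : 3 / 4 * hn (lincomb c e) <= hn (lincomb c f).
Proof.
have diff_le : hn (lincomb c f - lincomb c e) <= l1norm c * delta.
  by rewrite lincombB; apply: hnorm_lincomb_le.
have tri : hn (lincomb c e) <= hn (lincomb c f) + hn (lincomb c f - lincomb c e).
  by rewrite hnormB; apply: le_trans (hnormD _ _); rewrite addrC subrK.
have l1c : l1norm c * delta <= d%:R * hn (lincomb c e) * delta.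
  by rewrite ler_wpM2r ?l1norm_le_onb.
have := ler_wpM2l (hnorm_ge0 (lincomb c e)) delta_small; nra.
Qed.

Lemma lin_indep_perturb : lin_indep f.
Proof.
move=> c cf0 i; have := hnorm_lincomb_perturb c.
rewrite [lincomb c f]cf0 hnorm0 => ce_le0.
have /hnorm_eq0 ce0 : hn (lincomb c e) = 0.
  by apply/le_anti; rewrite hnorm_ge0 andbT; nra.
by rewrite -(ip_lincomb_onb e_on c i) ce0 ip0l.
Qed.

Lemma form_bound_perturb (h : H -> H -> R[i]) (eps gamma : R) :
  0 <= eps -> 0 <= gamma -> d%:R ^+ 2 * gamma <= eps / 8 ->
  (forall c a : 'I_d -> R[i], normc (h (lincomb c f) (lincomb a f) - h (lincomb c e) (lincomb a e))
     <= l1norm c * l1norm a * gamma) ->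
  (forall c a : 'I_d -> R[i], normc (h (lincomb c e) (lincomb a e))
     <= eps * hn (lincomb c e) * hn (lincomb a e)) ->
  forall c a : 'I_d -> R[i], normc (h (lincomb c f) (lincomb a f))
     <= 2 * eps * hn (lincomb c f) * hn (lincomb a f).
Proof.
move=> eps_ge0 gamma_ge0 gamma_small h_near h_e c a.
(* |h(cf, af)| <= (1 + 1/8) eps |ce| |ae| and |ce| <= 4/3 |cf|, whence (9/8)(16/9) = 2. *)
set Nc := hn (lincomb c e); set Na := hn (lincomb a e).
have [Nc_ge0 Na_ge0] : 0 <= Nc /\ 0 <= Na by split; apply: hnorm_ge0.
have tri : normc (h (lincomb c f) (lincomb a f))
    <= eps * Nc * Na + l1norm c * l1norm a * gamma.
  apply: le_trans (lerD (h_e c a) (h_near c a)).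
  by apply: le_trans (le_normcD _ _); rewrite addrC subrK.
have l1_le : l1norm c * l1norm a * gamma <= Nc * Na * (eps / 8).
  have : l1norm c * l1norm a <= (d%:R * Nc) * (d%:R * Na).
    by apply: ler_pM; rewrite ?l1norm_ge0 ?l1norm_le_onb.
  move=> /(ler_wpM2r gamma_ge0) /le_trans; apply.
  have -> : d%:R * Nc * (d%:R * Na) * gamma = Nc * Na * (d%:R ^+ 2 * gamma) by ring.
  by rewrite ler_wpM2l ?mulr_ge0.
have : 3 / 4 * Nc * (3 / 4 * Na) <= hn (lincomb c f) * hn (lincomb a f).
  by apply: ler_pM; rewrite ?hnorm_lincomb_perturb ?mulr_ge0 ?invr_ge0 ?ler0n.
have := mulr_ge0 Nc_ge0 Na_ge0; nra.
Qed.

End Perturbation.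

Definition linear_on (P : H -> H) (D : set H) :=
  forall a x y, D x -> D y -> P (a *: x + y) = a *: P x + P y.

(* [form A id lam x y = <(A - lam) x, y>], and [form B B lam] with [B = A^{1/2}]
   is the form-sense [A - lam] of [form_proj]. *)
Definition form (P Q : H -> H) (lam : R) x y := ip (P x) (Q y) - (lam%:C)%C * ip x y.

Section LinearOn.
Variables (P : H -> H) (D : set H).
Hypotheses (D_sub : is_subspace D) (P_lin : linear_on P D).

Lemma linear_on0 : P 0 = 0.
Proof.
have := P_lin 1 (subspace0 D_sub) (subspace0 D_sub).
by rewrite scale1r addr0 scale1r -{1}[P 0]addr0 => /addrI <-.
Qed.

Lemma linear_onZ a x : D x -> P (a *: x) = a *: P x.
Proof.
move=> Dx; rewrite -[a *: x]addr0 P_lin ?linear_on0 ?addr0 //; exact: subspace0.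
Qed.

Lemma linear_onD x y : D x -> D y -> P (x + y) = P x + P y.
Proof. by move=> Dx Dy; rewrite -[x]scale1r P_lin // !scale1r. Qed.

Lemma linear_on_lincomb n (c : 'I_n -> R[i]) g :
  (forall i, D (g i)) -> P (lincomb c g) = lincomb c (fun i => P (g i)).
Proof.
rewrite /lincomb => Dg; elim: (index_enum _) => [|i r IH].
  by rewrite !big_nil linear_on0.
have Dsum : D (\sum_(j <- r) c j *: g j).
  by apply: subspace_sum => // j; apply: subspaceZ.
by rewrite !big_cons linear_onD ?linear_onZ ?IH //; apply: subspaceZ.
Qed.

End LinearOn.

Lemma ip_lincomb n m (c : 'I_n -> R[i]) (a : 'I_m -> R[i]) f g :
  ip (lincomb c f) (lincomb a g) = \sum_i \sum_j c i * (a j)^* * ip (f i) (g j).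
Proof.
rewrite ip_suml; apply: eq_bigr => i _; rewrite ipZl ip_sumr mulr_sumr.
by apply: eq_bigr => j _; rewrite ipZr mulrA.
Qed.

Lemma form_lincomb D P Q lam n (c a : 'I_n -> R[i]) f g :
  is_subspace D -> linear_on P D -> linear_on Q D ->
  (forall i, D (f i)) -> (forall j, D (g j)) ->
  form P Q lam (lincomb c f) (lincomb a g)
  = \sum_i \sum_j c i * (a j)^* * form P Q lam (f i) (g j).
Proof.
move=> D_sub P_lin Q_lin Df Dg; rewrite /form !(linear_on_lincomb D_sub) //.
rewrite !ip_lincomb mulr_sumr -sumrB; apply: eq_bigr => i _.
rewrite mulr_sumr -sumrB; apply: eq_bigr => j _; ring.
Qed.

Lemma form_lincomb_perturb D P Q lam n (e f : 'I_n -> H) gamma :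
  is_subspace D -> linear_on P D -> linear_on Q D ->
  (forall i, D (e i)) -> (forall i, D (f i)) ->
  (forall i j, normc (form P Q lam (f i) (f j) - form P Q lam (e i) (e j)) <= gamma) ->
  forall c a : 'I_n -> R[i], normc (form P Q lam (lincomb c f) (lincomb a f)
                     - form P Q lam (lincomb c e) (lincomb a e))
     <= l1norm c * l1norm a * gamma.
Proof.
move=> D_sub P_lin Q_lin De Df entries c a.
rewrite !(form_lincomb _ _ _ D_sub P_lin Q_lin) // -sumrB /l1norm mulr_suml mulr_suml.
apply: le_trans (normc_sum _ _) (ler_sum _ _) => i _.
rewrite -sumrB mulr_sumr mulr_suml; apply: le_trans (normc_sum _ _) (ler_sum _ _) => j _.
by rewrite -mulrBr !Normc.normcM normcJ ler_wpM2l ?mulr_ge0 ?normc_ge0.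
Qed.

Definition graph_cvg (T : H -> H) (u : nat -> H) x := forall delta : R, 0 < delta ->
  \forall n \near \oo, hn (u n - x) <= delta /\ hn (T (u n) - T x) <= delta.

Lemma regular_graph_cvg T DT L x : regular ip T DT L -> DT x ->
  exists u : nat -> H, (forall n, L n (u n)) /\ graph_cvg T u x.
Proof.
case=> _ reg DTx; have [u [Lu u_cvg]] := reg x DTx; exists u; split => // delta delta_gt0.
have [N N_cvg] := u_cvg delta delta_gt0; exists N => // n /N_cvg.
by have := hnorm_ge0 (u n - x); have := hnorm_ge0 (T (u n) - T x); split; lra.
Qed.

Lemma graph_cvg_id T (u : nat -> H) x : graph_cvg T u x -> graph_cvg id u x.
Proof.
by move=> Tu delta delta_gt0; apply: filterS (Tu _ delta_gt0) => n [].
Qed.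

Lemma normc_ip_sub_le x x' y y' delta :
  hn (x' - x) <= delta -> hn (y' - y) <= delta -> delta <= 1 ->
  normc (ip x' y' - ip x y) <= delta * (hn x + hn y + 1).
Proof.
move=> dx dy delta_le1.
have -> : ip x' y' - ip x y = ip (x' - x) y' + ip x (y' - y) by rewrite ipBl ipBr; ring.
have y'_le : hn y' <= hn y + delta.
  by rewrite -[y'](subrK y) addrC; apply: le_trans (hnormD _ _) _; rewrite lerD2l.
have := cauchy_schwarz (x' - x) y'; have := cauchy_schwarz x (y' - y).
have := hnorm_ge0 x; have := hnorm_ge0 y'; have := hnorm_ge0 (x' - x).
have := le_normcD (ip (x' - x) y') (ip x (y' - y)); nra.
Qed.

Lemma form_graph_cvg P Q lam (u v : nat -> H) x y : graph_cvg P u x -> graph_cvg Q v y ->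
  forall gamma, 0 < gamma ->
  \forall n \near \oo, normc (form P Q lam (u n) (v n) - form P Q lam x y) <= gamma.
Proof.
move=> Pu Qv gamma gamma_gt0.
set K := hn (P x) + hn (Q y) + 1 + `|lam| * (hn x + hn y + 1).
have K_gt0 : 0 < K.
  have := mulr_ge0 (normr_ge0 lam) (addr_ge0 (addr_ge0 (hnorm_ge0 x) (hnorm_ge0 y)) ler01).
  by have := hnorm_ge0 (P x); have := hnorm_ge0 (Q y); rewrite /K; lra.
set delta := Num.min 1 (gamma / K).
have delta_gt0 : 0 < delta by rewrite lt_min ltr01 divr_gt0.
have delta_le1 : delta <= 1 by rewrite ge_min lexx.
have deltaK : delta * K <= gamma by rewrite -ler_pdivlMr // ge_min lexx orbT.
apply: filterS2 (Pu _ delta_gt0) (Qv _ delta_gt0) => n [ux Pux] [vy Qvy].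
have -> : form P Q lam (u n) (v n) - form P Q lam x y
    = (ip (P (u n)) (Q (v n)) - ip (P x) (Q y)) - (lam%:C)%C * (ip (u n) (v n) - ip x y).
  by rewrite /form; ring.
apply: le_trans (le_normcD _ _) _; rewrite normcN Normc.normcM normc_real.
have := normc_ip_sub_le Pux Qvy delta_le1; have := normc_ip_sub_le ux vy delta_le1.
have := normr_ge0 lam; have := ltW delta_gt0; rewrite /K in deltaK; nra.
Qed.

Lemma galerkin_form_bound D P Q lam (L : nat -> set H) d (e : 'I_d -> H)
    (F : 'I_d -> nat -> H) eps :
  is_subspace D -> linear_on P D -> linear_on Q D ->
  (forall n, is_subspace (L n)) -> (forall n, L n `<=` D) ->
  orthonormal e -> (forall i, D (e i)) -> (forall i n, L n (F i n)) ->
  (forall i, graph_cvg P (F i) (e i)) -> (forall i, graph_cvg Q (F i) (e i)) -> 0 < eps ->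
  (forall c a : 'I_d -> R[i], normc (form P Q lam (lincomb c e) (lincomb a e))
     <= eps * hn (lincomb c e) * hn (lincomb a e)) ->
  \forall n \near \oo, [/\ span (F^~ n) `<=` L n, has_dim (span (F^~ n)) d &
    forall y u, span (F^~ n) y -> span (F^~ n) u ->
      normc (form P Q lam y u) <= 2 * eps * hn y * hn u].
Proof.
move=> D_sub P_lin Q_lin L_sub LD e_on De LF FP FQ eps_gt0 form_e.
(* [d.+1] instead of [d] keeps the denominators nonzero when [d = 0]. *)
have d1_gt0 : 0 < d.+1%:R :> R by rewrite ltr0n.
pose delta : R := 1 / (4 * d.+1%:R); pose gamma := eps / (8 * d.+1%:R ^+ 2).
have delta_gt0 : 0 < delta by rewrite divr_gt0 ?mulr_gt0.
have gamma_gt0 : 0 < gamma by rewrite divr_gt0 ?mulr_gt0 ?exprn_gt0.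
have d_le : d%:R <= d.+1%:R :> R by rewrite ler_nat.
have delta_small : d%:R * delta <= 1 / 4.
  have : delta * (4 * d.+1%:R) = 1 by rewrite /delta mul1r mulVf ?gt_eqF ?mulr_gt0.
  by nra.
have gamma_small : d%:R ^+ 2 * gamma <= eps / 8.
  have : gamma * (8 * d.+1%:R ^+ 2) = eps.
    by rewrite /gamma mulfVK ?gt_eqF ?mulr_gt0 ?exprn_gt0.
  have : d%:R ^+ 2 <= d.+1%:R ^+ 2 :> R by rewrite ler_pXn2r ?nnegrE ?ler0n.
  by nra.
have F_near : \forall n \near \oo, forall i, hn (F i n - e i) <= delta.
  by apply: filter_forall => i; apply: filterS (FP i _ delta_gt0) => n [].
have F_form : \forall n \near \oo, forall i j,
    normc (form P Q lam (F i n) (F j n) - form P Q lam (e i) (e j)) <= gamma.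
  apply: filter_forall => i; apply: filter_forall => j.
  exact: form_graph_cvg (FP i) (FQ j) _ gamma_gt0.
apply: filterS2 F_near F_form => n Fe Fform.
have DF i : D (F i n) by apply/LD/LF.
split.
- exact: span_min (L_sub n) (LF^~ n).
- exact/has_dim_span/(lin_indep_perturb e_on (ltW delta_gt0) delta_small).
- move=> _ _ [c ->] [a ->].
  apply: (form_bound_perturb e_on (ltW delta_gt0) delta_small Fe
            (ltW eps_gt0) (ltW gamma_gt0)) => //.
  exact: form_lincomb_perturb D_sub P_lin Q_lin De DF Fform.
Qed.

Lemma galerkin_subspace (L : nat -> set H) : galerkin L -> forall n, is_subspace (L n).
Proof. by move=> L_gal n; have [m []] := L_gal n. Qed.

Lemma galerkin_orth_proj_bound A DA L lam V d eps :
  selfadjoint ip A DA -> galerkin L -> has_dim V d -> V `<=` DA -> 0 < eps ->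
  (forall x, V x -> hn (orth_proj ip V (A x - (lam%:C)%C *: x)) <= eps * hn x) ->
  regular ip A DA L ->
  exists W : nat -> set H, \forall n \near \oo, [/\ W n `<=` L n, has_dim (W n) d &
    forall y, W n y -> hn (orth_proj ip (W n) (A y - (lam%:C)%C *: y)) <= 2 * eps * hn y].
Proof.
case=> DA_sub A_lin _ _ L_gal V_dim VD eps_gt0 V_eps reg.
have [e [e_on Ve V_span]] := onb_of_dim V_dim.
have V_sub : is_subspace V by case: V_dim.
have [F FLA] := choice (fun i => regular_graph_cvg reg (VD _ (Ve i))).
exists (fun n => span (F^~ n)).
have form_e (c a : 'I_d -> R[i]) : normc (form A id lam (lincomb c e) (lincomb a e))
    <= eps * hn (lincomb c e) * hn (lincomb a e).
  have V_lincomb (c' : 'I_d -> R[i]) : V (lincomb c' e) by apply: (span_min V_sub Ve); exists c'.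
  rewrite /form -ipZl -ipBl (ip_orth_proj (orth_proj_exists e_on _ V_sub Ve V_span)) //.
  by apply: le_trans (cauchy_schwarz _ _) _; rewrite ler_wpM2r ?hnorm_ge0 ?V_eps.
have := galerkin_form_bound DA_sub A_lin (fun _ _ _ _ _ => erefl) (galerkin_subspace L_gal)
  reg.1 e_on (fun i => VD _ (Ve i)) (fun i => (FLA i).1) (fun i => (FLA i).2)
  (fun i => graph_cvg_id (FLA i).2) eps_gt0 form_e.
apply: filterS => n [WL W_dim W_form]; split => // y Wy.
apply: hnorm_orth_proj_le => [|u Wu]; first by rewrite !mulr_ge0 ?hnorm_ge0 ?ltW.
by have := W_form y u Wy Wu; rewrite /form -ipZl -ipBl.
Qed.

Lemma galerkin_form_proj_bound A DA B DB L lam V d eps :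
  is_sqrt_op ip A DA B DB -> galerkin L -> has_dim V d -> V `<=` DA -> 0 < eps ->
  (forall x, V x -> hn (orth_proj ip V (A x - (lam%:C)%C *: x)) <= eps * hn x) ->
  regular ip B DB L ->
  exists W : nat -> set H, \forall n \near \oo, [/\ W n `<=` L n, has_dim (W n) d &
    forall y, W n y -> hn (form_proj ip B lam (W n) y) <= 2 * eps * hn y].
Proof.
case=> -[DB_sub B_lin _ B_adj] _ DA_DB A_BB L_gal V_dim VD eps_gt0 V_eps reg.
have [e [e_on Ve V_span]] := onb_of_dim V_dim.
have V_sub : is_subspace V by case: V_dim.
have De i : DB (e i) by have /DA_DB [] := VD _ (Ve i).
have [F FLB] := choice (fun i => regular_graph_cvg reg (De i)).
exists (fun n => span (F^~ n)).
have form_e (c a : 'I_d -> R[i]) : normc (form B B lam (lincomb c e) (lincomb a e))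
    <= eps * hn (lincomb c e) * hn (lincomb a e).
  have V_lincomb (c' : 'I_d -> R[i]) : V (lincomb c' e) by apply: (span_min V_sub Ve); exists c'.
  set x := lincomb c e; set u := lincomb a e.
  have [Vx Vu] : V x /\ V u by split; apply: V_lincomb.
  have [DBx _] := (DA_DB x).1 (VD _ Vx).
  have [DBu DBBu] := (DA_DB u).1 (VD _ Vu).
  rewrite /form ((B_adj (B u) (B (B u))).2 (conj DBBu erefl) _ DBx) -(A_BB u (VD _ Vu)).
  rewrite -(real_complexJ lam) -ipZr -ipBr ipC normcJ mulrAC.
  rewrite (ip_orth_proj (orth_proj_exists e_on _ V_sub Ve V_span) Vx).
  by apply: le_trans (cauchy_schwarz _ _) _; rewrite ler_wpM2r ?hnorm_ge0 ?V_eps.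
have := galerkin_form_bound DB_sub B_lin B_lin (galerkin_subspace L_gal)
  reg.1 e_on De (fun i => (FLB i).1) (fun i => (FLB i).2) (fun i => (FLB i).2) eps_gt0 form_e.
apply: filterS => n [WL W_dim W_form]; split => // y Wy.
apply: hnorm_form_proj_le => [|u Wu]; first by rewrite !mulr_ge0 ?hnorm_ge0 ?ltW.
rewrite -normcJ rmorphB rmorphM /= real_complexJ -!ipC.
by have := W_form y u Wy Wu; rewrite /form mulrAC.
Qed.
End InnerProductSpace.

Theorem lemma3p6 (R : realType) (H : lmodType R[i]) (ip : H -> H -> R[i])
  (hH : is_sep_inf_dim_hilbert ip)
  (A : H -> H) (DA : set H) (hA : selfadjoint ip A DA)
  (L : nat -> set H) (hL : galerkin L)
  (lam : R) (V : set H) (d : nat) (hd : (0 < d)%N)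
  (hV : has_dim V d) (hVD : V `<=` DA)
  (eps : R) (heps : 0 < eps)
  (hVeps : forall x, V x ->
     hnorm ip (orth_proj ip V (A x - (lam%:C)%C *: x)) <= eps * hnorm ip x) :
  (regular ip A DA L ->
    exists (N : nat) (W : nat -> set H), (0 < N)%N /\
      forall n, (N <= n)%N ->
        [/\ W n `<=` L n, has_dim (W n) d &
            forall y, W n y ->
              hnorm ip (orth_proj ip (W n) (A y - (lam%:C)%C *: y))
                <= 2 * eps * Num.sqrt (d%:R) * hnorm ip y])
  /\
  (nonneg_op ip A DA -> forall (B : H -> H) (DB : set H),
    is_sqrt_op ip A DA B DB -> regular ip B DB L ->
    exists (N : nat) (W : nat -> set H), (0 < N)%N /\
      forall n, (N <= n)%N ->
        [/\ W n `<=` L n, has_dim (W n) d &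
            forall y, W n y ->
              hnorm ip (form_proj ip B lam (W n) y)
                <= 2 * eps * Num.sqrt (d%:R) * hnorm ip y]).
Proof.
case: hH => ipDZl ipC ip_ge0 ip_eq0 _.
have sqrt_d_ge1 : 1 <= Num.sqrt (d%:R : R) by rewrite -[X in X <= _]sqrtr1 ler_sqrt ?ler1n.
have weaken y (t : R) : t <= 2 * eps * hnorm ip y -> t <= 2 * eps * Num.sqrt d%:R * hnorm ip y.
  by have := mulr_ge0 (ltW heps) (hnorm_ge0 ip y); nra.
split => [reg | _ B DB B_sqrt reg].
- have [W [N _ W_bound]] :=
    galerkin_orth_proj_bound ipDZl ipC ip_ge0 ip_eq0 hA hL hV hVD heps hVeps reg.
  exists N.+1, W; split => // n /ltnW/W_bound [WL W_dim W_le].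
  by split => // y /W_le; apply: weaken.
- have [W [N _ W_bound]] :=
    galerkin_form_proj_bound ipDZl ipC ip_ge0 ip_eq0 B_sqrt hL hV hVD heps hVeps reg.
  exists N.+1, W; split => // n /ltnW/W_bound [WL W_dim W_le].
  by split => // y /W_le; apply: weaken.
Qed.
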